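(* Let $L$ be a simple Lie algebra over a field $k$ with $|k|\geq4$, generated by its pure extremal elements, whose extremal geometry contains lines. Let $x,y\in E$ with $g(x,y)=1$ and associated $5$-grading $L=\bigoplus_{i=-2}^2L_i$. Let $c,d\in E\cap L_{-1}$ with $[c,d]=x$, put $q=-[y,d]$ (so that $g(c,q)=1$), let $L=\bigoplus_{i=-2}^2L'_i$ be the $5$-grading associated with $(c,q)$, and put $J=L_{-1}\cap L'_{-1}$, $J'=L_{-1}\cap L'_0$. Then $L_{-1}=kc\oplus J\oplus J'\oplus kd$. Moreover $L_{-1}\cap L'_1=kd$.
   Context: A nonzero $a\in L$ is extremal if there is $g_a\colon L\to k$ with $[a,[a,u]]=2g_a(u)a$, $[[a,u],[a,w]]=g_a([u,w])a+g_a(w)[a,u]-g_a(u)[a,w]$, $[a,[u,[a,w]]]=g_a([u,w])a-g_a(w)[a,u]-g_a(u)[a,w]$ for all $u,w$; sandwiches satisfy $[a,[a,u]]=0=[a,[u,[a,w]]]$; pure = non-sandwich; $E$ = set of extremal elements; $g$ = unique symmetric bilinear form with $g(a,u)=g_a(u)$ for $a\in E$. Pure extremal $a,b$, $ka\ne kb$, are collinear if $[a,b]=0$ and $\lambda a+\mu b\in E\cup\{0\}$ for all $\lambda,\mu$; the extremal geometry contains lines iff such a pair exists. For $a,b\in E$ with $g(a,b)=1$ the associated $5$-grading is $M_{-2}=ka$, $M_{-1}=[a,U]$, $M_0=\{l:[a,l]\in ka,[b,l]\in kb\}$, $M_1=[b,U]$, $M_2=kb$ with $U=\{u:g(u,a)=g(u,b)=g(u,[a,b])=0\}$.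 Elements $c,d$ as in the claim exist under these hypotheses. *)

From HB Require Import structures.
From mathcomp Require Import all_boot all_order all_algebra.
Set Implicit Arguments. Unset Strict Implicit. Unset Printing Implicit Defensive.
Import GRing.Theory.
Local Open Scope ring_scope.

Section Lie.
Variables (k : fieldType) (L : lmodType k) (br : L -> L -> L).

Definition is_lie_bracket : Prop :=
  [/\ (forall (a : k) u v w, br (a *: u + v) w = a *: br u w + br v w),
      (forall (a : k) u v w, br w (a *: u + v) = a *: br w u + br w v),
      (forall u, br u u = 0) &
      (forall u v w, br u (br v w) + br v (br w u) + br w (br u v) = 0)].

Definition is_subspace (S : L -> Prop) : Prop :=
  [/\ S 0, (forall u v, S u -> S v -> S (u + v)) &
      (forall (a : k) u, S u -> S (a *: u))].

Definition is_ideal (I : L -> Prop) : Prop :=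
  is_subspace I /\ (forall u v, I v -> I (br u v)).

Definition is_subalgebra (S : L -> Prop) : Prop :=
  is_subspace S /\ (forall u v, S u -> S v -> S (br u v)).

Definition lie_simple : Prop :=
  (exists u v, br u v != 0) /\
  (forall I, is_ideal I -> (forall v, I v -> v = 0) \/ (forall v, I v)).

Definition extremal_form (a : L) (ga : L -> k) : Prop :=
  forall u w,
  [/\ br a (br a u) = (2 * ga u) *: a,
      br (br a u) (br a w) = ga (br u w) *: a + ga w *: br a u - ga u *: br a w &
      br a (br u (br a w)) = ga (br u w) *: a - ga w *: br a u - ga u *: br a w].

Definition extremal (a : L) : Prop :=
  a != 0 /\ exists ga : L -> k, extremal_form a ga.

Definition sandwich (a : L) : Prop :=
  extremal a /\ forall u w, br a (br a u) = 0 /\ br a (br u (br a w)) = 0.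

Definition pure_extremal (a : L) : Prop := extremal a /\ ~ sandwich a.

Definition generated_by_pure : Prop :=
  forall S, is_subalgebra S -> (forall a, pure_extremal a -> S a) -> forall v, S v.

Definition collinear (a b : L) : Prop :=
  [/\ pure_extremal a, pure_extremal b,
      (forall l : k, a != l *: b) /\ (forall l : k, b != l *: a),
      br a b = 0 &
      forall l m : k, extremal (l *: a + m *: b) \/ l *: a + m *: b = 0].

Definition has_lines : Prop := exists a b, collinear a b.

Definition extremal_form_g (g : L -> L -> k) : Prop :=
  [/\ (forall (a : k) u v w, g (a *: u + v) w = a * g u w + g v w),
      (forall u v, g u v = g v u) &
      (forall a, extremal a -> extremal_form a (g a))].

(* 5-grading associated with (a,b), g(a,b) = 1 *)
Variable g : L -> L -> k.
Definition gradU (a b : L) (u : L) : Prop :=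
  [/\ g u a = 0, g u b = 0 & g u (br a b) = 0].
Definition grad_m2 (a b : L) (v : L) : Prop := exists l : k, v = l *: a.
Definition grad_m1 (a b : L) (v : L) : Prop := exists u, gradU a b u /\ v = br a u.
Definition grad_0 (a b : L) (v : L) : Prop :=
  (exists l : k, br a v = l *: a) /\ (exists l : k, br b v = l *: b).
Definition grad_1 (a b : L) (v : L) : Prop := exists u, gradU a b u /\ v = br b u.
Definition grad_2 (a b : L) (v : L) : Prop := exists l : k, v = l *: b.

End Lie.

Definition card_ge4 (k : fieldType) : Prop :=
  exists a b c d : k, uniq [:: a; b; c; d].

From HB Require Import structures.
From mathcomp Require Import all_boot all_order all_algebra.
From mathcomp Require Import ring.
Import GRing.Theory.
Local Open Scope ring_scope.

(* Everything is read off from eigenvalues of ad h, h = [x,y], and of ad h',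
   h' = [c,q]: L_{-1} is the (-1)-eigenspace of ad h inside the kernel of ad x,
   and likewise for the grading of (c,q).  For v in L_{-1} one has [c,v] = s x,
   and with T = [c,[q,v]] the identity
     v = g(q,v) c + (- T - 2 g(q,v) c) + (v + T + g(q,v) c - s d) + s d
   splits v into components along c, J, J' and d.  Directness follows by
   applying ad c, g(q,.) and ad h' in turn.  The facts about single extremal
   elements used on the way (g(a,a) = 0, invariance of g, q extremal) come from
   simplicity, which forbids ad a from mapping L into k a, and from the
   automorphism exp(ad a). *)

Set Implicit Arguments. Unset Strict Implicit. Unset Printing Implicit Defensive.

Section LinearCombinations.
Variables (k : fieldType) (V : lmodType k).

Inductive lexpr : Type :=
  | LZero | LAtom of nat | LAdd of lexpr & lexpr | LOpp of lexpr | LScale of k & lexpr.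

Fixpoint lexpr_eval (env : seq V) (e : lexpr) : V :=
  match e with
  | LZero => 0
  | LAtom i => nth 0 env i
  | LAdd e1 e2 => lexpr_eval env e1 + lexpr_eval env e2
  | LOpp e1 => - lexpr_eval env e1
  | LScale s e1 => s *: lexpr_eval env e1
  end.

Fixpoint lexpr_coef (e : lexpr) (i : nat) : k :=
  match e with
  | LZero => 0
  | LAtom j => if Nat.eqb j i then 1 else 0
  | LAdd e1 e2 => lexpr_coef e1 i + lexpr_coef e2 i
  | LOpp e1 => - lexpr_coef e1 i
  | LScale s e1 => s * lexpr_coef e1 i
  end.

Lemma lexpr_evalE env e :
  lexpr_eval env e = \sum_(0 <= i < size env) lexpr_coef e i *: nth 0 env i.
Proof.
elim: e => [|j|e1 IH1 e2 IH2|e1 IH1|s e1 IH1] /=.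
- by rewrite big1 // => i _; rewrite scale0r.
- have coefE i : (if Nat.eqb j i then 1 else 0) = (j == i)%:R :> k.
    by case: (PeanoNat.Nat.eqb_spec j i) => [->|/eqP/negPf->]; rewrite ?eqxx.
  under eq_bigr do rewrite coefE.
  case: (ltnP j (size env)) => Hj.
  + rewrite (bigD1_seq j) ?mem_iota ?iota_uniq ?subn0 //= eqxx scale1r big1 ?addr0 //.
    by move=> i /negPf; rewrite eq_sym => ->; rewrite scale0r.
  + rewrite nth_default // big1_seq // => i; rewrite mem_iota add0n subn0 => /andP[_ Hi].
    by rewrite (gtn_eqF (leq_trans Hi Hj)) scale0r.
- by rewrite IH1 IH2 -big_split; apply: eq_bigr => i _; rewrite scalerDl.
- by rewrite IH1 -sumrN; apply: eq_bigr => i _; rewrite scaleNr.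
- by rewrite IH1 scaler_sumr; apply: eq_bigr => i _; rewrite scalerA.
Qed.

Fixpoint coef_agree (n : nat) (e1 e2 : lexpr) : Prop :=
  if n is n'.+1 then lexpr_coef e1 n' = lexpr_coef e2 n' /\ coef_agree n' e1 e2
  else True.

Lemma lexpr_eval_eq env e1 e2 :
  coef_agree (size env) e1 e2 -> lexpr_eval env e1 = lexpr_eval env e2.
Proof.
move=> agree; rewrite !lexpr_evalE; apply: eq_big_seq => i.
rewrite mem_iota add0n subn0 => /andP[_ lt_i]; congr (_ *: _).
elim: (size env) agree lt_i => [//|n IH] /= [eq_n agree].
by rewrite ltnS leq_eqVlt => /orP[/eqP->|/(IH agree)].
Qed.

End LinearCombinations.

Lemma eq_by_diff (V : zmodType) (u v u' v' : V) : u' = v' -> u - v = u' - v' -> u = v.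
Proof. by move=> E D; apply/eqP; rewrite -subr_eq0 D E subrr. Qed.

(* [lmod] proves an identity between linear combinations of arbitrary terms
   of an lmodType by reification and coefficientwise [ring]. *)
Ltac lexpr_index t env :=
  match env with
  | cons t _ => constr:(0%N)
  | cons _ ?env' => let n := lexpr_index t env' in constr:(S n)
  end.
Ltac lexpr_atoms e env :=
  match e with
  | ?a + ?b => let env := lexpr_atoms a env in lexpr_atoms b env
  | - ?a => lexpr_atoms a env
  | _ *: ?a => lexpr_atoms a env
  | 0 => env
  | _ => constr:(cons e env)
  end.
Ltac lexpr_reify e env :=
  match e with
  | ?a + ?b =>
      let x := lexpr_reify a env in let y := lexpr_reify b env in open_constr:(LAdd x y)
  | - ?a => let x := lexpr_reify a env in open_constr:(LOpp x)
  | ?s *: ?a => let x := lexpr_reify a env in open_constr:(LScale s x)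
  | 0 => open_constr:(LZero _)
  | _ => let i := lexpr_index e env in open_constr:(LAtom _ i)
  end.
Ltac lmod :=
  match goal with |- @eq ?T ?l ?r =>
    let env := lexpr_atoms l (@nil T) in
    let env := lexpr_atoms r env in
    let el := lexpr_reify l env in
    let er := lexpr_reify r env in
    change (lexpr_eval env el = lexpr_eval env er); apply: lexpr_eval_eq;
    cbv [coef_agree lexpr_coef Nat.eqb size]; repeat split; ring
  end.

Section LieAlgebra.
Variables (k : fieldType) (L : lmodType k) (br : L -> L -> L) (g : L -> L -> k).
Hypotheses (Hbr : is_lie_bracket br) (Hg : extremal_form_g br g).

Lemma brDl u v w : br (u + v) w = br u w + br v w.
Proof. by case: Hbr => brl _ _ _; have := brl 1 u v w; rewrite !scale1r. Qed.

Lemma brDr u v w : br w (u + v) = br w u + br w v.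
Proof. by case: Hbr => _ brr _ _; have := brr 1 u v w; rewrite !scale1r. Qed.

Lemma br0l w : br 0 w = 0.
Proof. by apply/eqP; rewrite -[X in X == _](addrK (br 0 w)) -brDl addr0 subrr. Qed.

Lemma br0r w : br w 0 = 0.
Proof. by apply/eqP; rewrite -[X in X == _](addrK (br w 0)) -brDr addr0 subrr. Qed.

Lemma brZl s u w : br (s *: u) w = s *: br u w.
Proof. by case: Hbr => brl _ _ _; have := brl s u 0 w; rewrite !addr0 br0l addr0. Qed.

Lemma brZr s u w : br w (s *: u) = s *: br w u.
Proof. by case: Hbr => _ brr _ _; have := brr s u 0 w; rewrite !addr0 br0r addr0. Qed.

Lemma brNl u w : br (- u) w = - br u w.
Proof. by rewrite -scaleN1r brZl scaleN1r. Qed.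

Lemma brNr u w : br w (- u) = - br w u.
Proof. by rewrite -scaleN1r brZr scaleN1r. Qed.

Lemma brxx u : br u u = 0.
Proof. by case: Hbr. Qed.

Lemma br_antisym u v : br u v = - br v u.
Proof.
have := brxx (u + v); rewrite brDl !brDr !brxx add0r addr0 => /eqP.
by rewrite addr_eq0 => /eqP.
Qed.

Lemma br_jacobi a b w : br a (br b w) = br (br a b) w + br b (br a w).
Proof.
case: Hbr => _ _ _ jacobi; apply: (eq_by_diff (jacobi a b w)).
rewrite (br_antisym w (br a b)) (br_antisym w a) brNr; lmod.
Qed.

Lemma gDl u v w : g (u + v) w = g u w + g v w.
Proof. by case: Hg => gl _ _; have := gl 1 u v w; rewrite scale1r mul1r. Qed.

Lemma g0l w : g 0 w = 0.
Proof. by apply/eqP; rewrite -[X in X == _](addrK (g 0 w)) -gDl addr0 subrr. Qed.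

Lemma gZl s u w : g (s *: u) w = s * g u w.
Proof. by case: Hg => gl _ _; have := gl s u 0 w; rewrite addr0 g0l addr0. Qed.

Lemma gC u v : g u v = g v u.
Proof. by case: Hg. Qed.

Lemma gNl u w : g (- u) w = - g u w.
Proof. by rewrite -scaleN1r gZl mulN1r. Qed.

Lemma gDr u v w : g w (u + v) = g w u + g w v.
Proof. by rewrite gC gDl gC (gC v). Qed.

Lemma g0r w : g w 0 = 0.
Proof. by rewrite gC g0l. Qed.

Lemma gZr s u w : g w (s *: u) = s * g w u.
Proof. by rewrite gC gZl gC. Qed.

Lemma gNr u w : g w (- u) = - g w u.
Proof. by rewrite gC gNl gC. Qed.

Lemma extremal_neq0 a : extremal br a -> a != 0.
Proof. by case. Qed.

Lemma extremal_scaler_eq0 a s : extremal br a -> s *: a = 0 -> s = 0.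
Proof. by move=> /extremal_neq0 a0 /eqP; rewrite scaler_eq0 (negPf a0) orbF => /eqP. Qed.

Lemma extremal_adad a u : extremal br a -> br a (br a u) = (2 * g a u) *: a.
Proof. by move=> Ha; case: Hg => _ _ /(_ a Ha u u) []. Qed.

Lemma extremal_br_ad a u w : extremal br a ->
  br (br a u) (br a w) = g a (br u w) *: a + g a w *: br a u - g a u *: br a w.
Proof. by move=> Ha; case: Hg => _ _ /(_ a Ha u w) []. Qed.

Lemma extremal_ad_br_ad a u w : extremal br a ->
  br a (br u (br a w)) = g a (br u w) *: a - g a w *: br a u - g a u *: br a w.
Proof. by move=> Ha; case: Hg => _ _ /(_ a Ha u w) []. Qed.

Lemma extremalZ a s : extremal br a -> s != 0 -> extremal br (s *: a).
Proof.
move=> Ha s0; split; first by rewrite scaler_eq0 negb_or s0 extremal_neq0.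
exists (fun u => s * g a u) => u w; rewrite !brZl !brZr.
by split; rewrite ?extremal_adad ?extremal_br_ad ?extremal_ad_br_ad //; lmod.
Qed.

Lemma extremalN a : extremal br a -> extremal br (- a).
Proof. by move=> Ha; rewrite -scaleN1r; apply: extremalZ; rewrite ?oppr_eq0 ?oner_eq0. Qed.

(* For extremal [a] this is exp(ad a): (ad a)^2 u = 2 g(a,u) a and (ad a)^3 = 0. *)
Definition expad a u := u + br a u + g a u *: a.

Lemma expadD a u v : expad a (u + v) = expad a u + expad a v.
Proof. by rewrite /expad brDr gDr; lmod. Qed.

Lemma expadZ a s u : expad a (s *: u) = s *: expad a u.
Proof. by rewrite /expad brZr gZr; lmod. Qed.

Lemma expadN a u : expad a (- u) = - expad a u.
Proof. by rewrite -scaleN1r expadZ scaleN1r. Qed.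

Lemma expad_br a u w : extremal br a ->
  br (expad a u) (expad a w) = expad a (br u w).
Proof.
move=> Ha; rewrite /expad !brDl !brDr !brZl !brZr brxx extremal_br_ad //.
rewrite (br_antisym u a) (br_antisym (br a u) a) !extremal_adad // (br_jacobi a u w).
by rewrite scaler0; lmod.
Qed.

Section Simple.
Hypothesis Hsimple : lie_simple br.

Lemma ad_not_into_line a : a != 0 -> ~ (forall w, exists s, br a w = s *: a).
Proof.
move=> a0 into_line; pose I v := exists s : k, v = s *: a.
have I_ideal : is_ideal br I.
  split; first split.
  - by exists 0; rewrite scale0r.
  - by move=> u v [s ->] [t ->]; exists (s + t); rewrite scalerDl.
  - by move=> t u [s ->]; exists (t * s); rewrite scalerA.
  - move=> u v [s ->]; have [t ut] := into_line u; exists (- (s * t)).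
    by rewrite brZr br_antisym ut scalerN scalerA scaleNr.
case: Hsimple => [[u [v uv]]] /(_ I I_ideal) [I0|Iall].
- by move: a0; rewrite (I0 a) ?eqxx //; exists 1; rewrite scale1r.
- move: uv; have [s ->] := Iall u; have [t ->] := Iall v.
  by rewrite brZl brZr brxx !scaler0 eqxx.
Qed.

Lemma extremal_g_ad_scale a w : extremal br a -> g a (br a w) *: a = g a a *: br a w.
Proof.
move=> Ha; apply: (eq_by_diff (esym (extremal_br_ad a w Ha))).
by rewrite brxx br0l; lmod.
Qed.

Lemma extremal_gaa a : extremal br a -> g a a = 0.
Proof.
move=> Ha; apply/eqP; apply: contraT => gaa0; case: (ad_not_into_line (extremal_neq0 Ha)).
move=> w; exists (g a (br a w) / g a a).
by rewrite mulrC -scalerA extremal_g_ad_scale // scalerA mulVf ?scale1r.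
Qed.

Lemma extremal_g_ad a w : extremal br a -> g a (br a w) = 0.
Proof.
move=> Ha; apply: (extremal_scaler_eq0 Ha).
by rewrite extremal_g_ad_scale // extremal_gaa // scale0r.
Qed.

Lemma extremal_br_notin_line a b s : extremal br a -> g a b != 0 -> br a b != s *: a.
Proof.
move=> Ha ab0; apply/eqP => ab_line; case: (ad_not_into_line (extremal_neq0 Ha)) => w.
exists ((g a (br b w) + g a w * s - s * (2 * g a w)) / g a b).
apply: (scalerI ab0); rewrite scalerA mulrC mulfVK //.
have := extremal_br_ad b w Ha; rewrite ab_line brZl extremal_adad // scalerA => E.
by apply: (eq_by_diff E); lmod.
Qed.

Lemma extremal_br_indep a b s t : extremal br a -> g a b != 0 ->
  s *: br a b = t *: a -> s = 0 /\ t = 0.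
Proof.
move=> Ha ab0 E; have s0 : s = 0.
  apply/eqP; apply: contraT => s_neq0.
  have /eqP[] := extremal_br_notin_line (t / s) Ha ab0.
  by apply: (scalerI s_neq0); rewrite E scalerA mulrC mulfVK.
by split=> //; apply: (extremal_scaler_eq0 Ha); rewrite -E s0 scale0r.
Qed.

Lemma expad_inv a u : extremal br a -> expad (- a) (expad a u) = u.
Proof.
move=> Ha; rewrite /expad !brDr !brZr !brNl brxx extremal_adad //.
by rewrite !gNl !gDr !gZr extremal_g_ad // extremal_gaa //; lmod.
Qed.

Lemma expad_extremal_form a b : extremal br a -> extremal br b ->
  extremal_form br (expad a b) (fun u => g b (expad (- a) u)).
Proof.
move=> Ha Hb u w.
have expadK v : expad a (expad (- a) v) = v.
  by have := expad_inv v (extremalN Ha); rewrite opprK.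
rewrite -(expadK u) -(expadK w); move: (expad (- a) u) (expad (- a) w) => {}u {}w.
rewrite !expad_br // !expad_inv //.
by split; rewrite ?extremal_adad ?extremal_br_ad ?extremal_ad_br_ad // ?expadD ?expadN ?expadZ.
Qed.

Lemma expad_extremal a b : extremal br a -> extremal br b -> extremal br (expad a b).
Proof.
move=> Ha Hb; split; last by exists (fun u => g b (expad (- a) u)); apply: expad_extremal_form.
apply/eqP => ab0; case/eqP: (extremal_neq0 Hb).
by rewrite -(expad_inv b Ha) ab0 /expad br0r g0r scale0r !addr0.
Qed.

Lemma extremal_form_unique z ga w0 : extremal br z -> extremal_form br z ga ->
  g z w0 != 0 -> ga w0 = g z w0 -> ga =1 g z.
Proof.
move=> Hz form_ga zw0 ga_w0 w; apply/eqP; rewrite -subr_eq0; apply/eqP.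
have [_ form_w0_w _] := form_ga w0 w.
have [] // := extremal_br_indep (s := ga w - g z w) (t := g z (br w0 w) - ga (br w0 w)) Hz zw0.
apply: (eq_by_diff (esym form_w0_w)).
by rewrite extremal_br_ad // ga_w0; lmod.
Qed.

(* The form of z = exp(ad a) b is u |-> g(b, exp(-ad a) u); by uniqueness it is
   g(z, .), and expanding both sides at u gives the claim. *)
Lemma g_invariant a b u : extremal br a -> extremal br b -> g a b != 0 ->
  g (br b a) u = g b (br a u).
Proof.
move=> Ha Hb ab0.
have z_a : g (expad a b) a = g a b.
  by rewrite /expad !gDl gZl extremal_gaa // mulr0 addr0 (gC (br a b)) extremal_g_ad // addr0 gC.
have ga_a : g b (expad (- a) a) = g (expad a b) a.
  by rewrite z_a /expad brNl brxx oppr0 gNl extremal_gaa // oppr0 scale0r !addr0 gC.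
have := extremal_form_unique (expad_extremal Ha Hb) (expad_extremal_form Ha Hb) _ ga_a u.
rewrite z_a => /(_ ab0); rewrite /expad !gDr !gDl brNl !gNr !gNl !gZr !gZl (br_antisym b a) gNl.
by rewrite gNr (gC b a) => E; apply: (eq_by_diff E); ring.
Qed.

Lemma grad_m1_ga a b v : extremal br a -> grad_m1 br g a b v -> g a v = 0.
Proof. by move=> Ha [u [_ ->]]; rewrite extremal_g_ad. Qed.

Lemma grad_m1_br a b v w : extremal br a ->
  grad_m1 br g a b v -> grad_m1 br g a b w -> exists s, br v w = s *: a.
Proof.
move=> Ha [u [[ua _ _] ->]] [u' [[u'a _ _] ->]]; exists (g a (br u u')).
by rewrite extremal_br_ad // (gC a u') u'a (gC a u) ua !scale0r addr0 subr0.
Qed.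

Lemma grad_1_m1 a b v : grad_1 br g a b v <-> grad_m1 br g b a v.
Proof.
have U_sym u : gradU br g a b u <-> gradU br g b a u.
  by split=> -[ua ub uh]; split=> //; move: uh; rewrite br_antisym gNr => /eqP;
    rewrite oppr_eq0 => /eqP.
by split=> -[u [/U_sym Uu ->]]; exists u.
Qed.

Section Grading.
Variables a b : L.
Hypotheses (Ha : extremal br a) (Hb : extremal br b) (Hab : g a b = 1).
Local Notation h := (br a b).

Let ab0 : g a b != 0. Proof. by rewrite Hab oner_neq0. Qed.
Let ba0 : g b a != 0. Proof. by rewrite gC Hab oner_neq0. Qed.

Lemma grad_m1_adb v : br a v = 0 -> br h v = - v -> br a (br b v) = - v.
Proof. by move=> av hv; rewrite br_jacobi av br0r addr0 hv. Qed.

Lemma grad_m1_g_adb v : br a v = 0 -> br h v = - v ->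
  g a (br b v) = 0 /\ g a (br b (br b v)) = 0.
Proof.
move=> av hv; have abv := grad_m1_adb av hv.
apply: (extremal_br_indep Ha ab0).
have := extremal_ad_br_ad b (br b v) Ha; rewrite abv !brNr abv opprK Hab scale1r => E.
by apply: (eq_by_diff E); lmod.
Qed.

Lemma grad_m1P v : grad_m1 br g a b v <-> br a v = 0 /\ br h v = - v.
Proof.
split=> [[u [[ua ub uh] ->]] | [av hv]].
  rewrite extremal_adad // extremal_br_ad // -(g_invariant u Hb Ha ba0).
  rewrite (gC a u) (gC h u) ua uh Hab mulr0 !scale0r scale1r add0r.
  by split=> //; lmod.
have [gabv gabbv] := grad_m1_g_adb av hv.
exists (- br b v); split; last by rewrite brNr grad_m1_adb // opprK.
split; rewrite gC gNr.
- by rewrite gabv oppr0.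
- by rewrite extremal_g_ad // oppr0.
- by rewrite g_invariant // gabbv oppr0.
Qed.

Lemma grad_m1_gb v : grad_m1 br g a b v -> g b v = 0.
Proof. by case=> u [[_ _ uh] ->]; rewrite -g_invariant // br_antisym gNl gC uh oppr0. Qed.

End Grading.

Lemma grad_1P a b : extremal br a -> extremal br b -> g a b = 1 ->
  forall v, grad_1 br g a b v <-> br b v = 0 /\ br (br a b) v = v.
Proof.
move=> Ha Hb Hab v; rewrite grad_1_m1 (grad_m1P Hb Ha) ?(gC b a) // (br_antisym b a) brNl.
by split=> -[bv hv]; split=> //; [apply: oppr_inj | rewrite hv].
Qed.

Section Proposition.
Variables x y c d q : L.
Hypotheses (Hx : extremal br x) (Hy : extremal br y) (Hxy : g x y = 1).
Hypotheses (Hc : extremal br c) (Hc1 : grad_m1 br g x y c).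
Hypotheses (Hd : extremal br d) (Hd1 : grad_m1 br g x y d).
Hypotheses (Hcd : br c d = x) (Hq : q = - br y d).
Local Notation h := (br x y).
Local Notation h' := (br c q).

Let grad_m1_xyP := grad_m1P Hx Hy Hxy.

Lemma br_xc : br x c = 0. Proof. by case: (grad_m1_xyP c).1. Qed.
Lemma br_hc : br h c = - c. Proof. by case: (grad_m1_xyP c).1. Qed.
Lemma br_xd : br x d = 0. Proof. by case: (grad_m1_xyP d).1. Qed.
Lemma br_hd : br h d = - d. Proof. by case: (grad_m1_xyP d).1. Qed.

Lemma br_xq : br x q = d.
Proof. by rewrite Hq brNr grad_m1_adb ?opprK ?br_xd ?br_hd. Qed.

Lemma g_xq : g x q = 0.
Proof. by rewrite Hq gNr (grad_m1_g_adb Hx Hxy br_xd br_hd).1 oppr0. Qed.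

Lemma br_qd : br q d = 0.
Proof.
rewrite Hq brNl br_antisym (br_antisym y d) brNr extremal_adad //.
by rewrite gC (grad_m1_gb Hx Hy Hxy Hd1) mulr0 scale0r !oppr0.
Qed.

Lemma br_hq : br h q = q.
Proof.
have hy : br h y = 2 *: y.
  by rewrite br_antisym (br_antisym x y) brNr opprK extremal_adad // gC Hxy mulr1.
by rewrite Hq brNr br_jacobi br_hd brNr hy brZl; lmod.
Qed.

Lemma q_extremal : extremal br q.
Proof.
have gyd := grad_m1_gb Hx Hy Hxy Hd1; have gxd := grad_m1_ga Hx Hd1.
have -> : q = expad x (expad y (- d)).
  rewrite /expad brNr gNr gyd oppr0 scale0r addr0 -Hq brDr gDr brNr gNr.
  by rewrite br_xq br_xd g_xq gxd; lmod.
by apply: expad_extremal => //; apply: expad_extremal => //; apply: extremalN.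
Qed.

Lemma g_cq : g c q = 1.
Proof.
have c_h : br c h = c by rewrite br_antisym br_hc opprK.
have x_cy : br x (br c y) = c by rewrite br_jacobi br_xc br0l add0r c_h.
have := extremal_ad_br_ad y d Hc.
rewrite Hcd (br_antisym y x) brNr c_h (gC c y) (grad_m1_gb Hx Hy Hxy Hc1) scale0r subr0.
move=> E; have {}E : g c d *: br c y = (g c (br y d) + 1) *: c.
  by apply: (eq_by_diff E); lmod.
have gcd : g c d = 0.
  by apply: (extremal_scaler_eq0 Hc); have := congr1 (br x) E; rewrite !brZr x_cy br_xc scaler0.
move: E; rewrite gcd scale0r => /esym/(extremal_scaler_eq0 Hc) gcyd.
by rewrite Hq gNr; apply: (eq_by_diff (esym gcyd)); ring.
Qed.

Lemma g_qc : g q c = 1. Proof. by rewrite gC g_cq. Qed.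

Let q_ext : extremal br q := q_extremal.
Let cq0 : g c q != 0. Proof. by rewrite g_cq oner_neq0. Qed.
Let qc0 : g q c != 0. Proof. by rewrite g_qc oner_neq0. Qed.
Let grad_m1_cqP := grad_m1P Hc q_ext g_cq.
Let grad_1_cqP := grad_1P Hc q_ext g_cq.

Lemma br_h'c : br h' c = - 2 *: c.
Proof. by rewrite br_antisym extremal_adad // g_cq mulr1 scaleNr. Qed.

Lemma br_h'q : br h' q = 2 *: q.
Proof.
by rewrite br_antisym (br_antisym c q) brNr opprK extremal_adad // g_qc mulr1.
Qed.

Lemma br_h'd : br h' d = d.
Proof.
have := br_jacobi c q d; rewrite br_qd br0r Hcd => /eqP; rewrite eq_sym addr_eq0 => /eqP ->.
by rewrite br_antisym br_xq opprK.
Qed.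

Lemma grad_m1_cap_grad_0 j : grad_m1 br g x y j -> grad_0 br c q j ->
  [/\ br c j = 0, br q j = 0, g q j = 0 & br h' j = 0].
Proof.
move=> Hj [[s cj] [t qj]].
have c_j : br c j = 0.
  (* [c,j] lies in both k c and k x, and g(y,.) separates these lines. *)
  have [r cj_x] := grad_m1_br Hx Hc1 Hj.
  have := congr1 (g y) cj_x; rewrite cj !gZr (grad_m1_gb Hx Hy Hxy Hc1) (gC y x) Hxy.
  by rewrite mulr0 mulr1 => r0; rewrite -cj cj_x -r0 scale0r.
have q_j : br q j = 0.
  have := extremal_ad_br_ad q j Hc; rewrite c_j !br0r qj gZr g_cq mulr1 scaler0 subr0 => E.
  have [_ t0] : g c j = 0 /\ t = 0.
    by apply: (extremal_br_indep Hc cq0); apply: (eq_by_diff E); lmod.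
  by rewrite t0 scale0r.
have g_qj : g q j = 0.
  have := extremal_ad_br_ad c j q_ext; rewrite q_j c_j !br0r g0r => E.
  apply: (proj1 (extremal_br_indep (t := 0) q_ext qc0 _)).
  by apply: (eq_by_diff E); lmod.
by split=> //; have := br_jacobi c q j; rewrite q_j c_j !br0r addr0.
Qed.

Section Decomposition.
Variables (v : L) (s : k).
Hypotheses (Hv : grad_m1 br g x y v) (Hcv : br c v = s *: x).
Local Notation T := (br c (br q v)).

Let x_v : br x v = 0. Proof. by case: (grad_m1_xyP v).1. Qed.
Let h_v : br h v = - v. Proof. by case: (grad_m1_xyP v).1. Qed.

Lemma br_xT : br x T = 0.
Proof.
have [r dv] := grad_m1_br Hx Hd1 Hv.
rewrite br_jacobi br_xc br0l add0r (br_jacobi x q v) br_xq x_v br0r addr0 dv brZr.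
by rewrite br_antisym br_xc oppr0 scaler0.
Qed.

Lemma br_hT : br h T = - T.
Proof. by rewrite br_jacobi br_hc brNl (br_jacobi h q v) br_hq h_v brNr addrN br0r addr0. Qed.

Lemma g_c_qv : g c (br q v) = 0.
Proof.
rewrite -g_invariant // br_antisym gNl g_invariant //.
by rewrite Hcv gZr gC g_xq mulr0 oppr0.
Qed.

Lemma br_cT : br c T = 0.
Proof. by rewrite extremal_adad // g_c_qv mulr0 scale0r. Qed.

Lemma br_qT : br q T = - (g q v *: br q c) - br q v.
Proof.
rewrite extremal_ad_br_ad // Hcv gZr gC g_xq mulr0 scale0r sub0r.
by rewrite g_qc scale1r.
Qed.

Lemma br_h'T : br h' T = (2 * g q v) *: c - T.
Proof.
have h'v : br h' v = T + s *: d.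
  have := br_jacobi c q v; rewrite Hcv brZr (br_antisym q x) br_xq => E.
  by apply: (eq_by_diff (esym E)); lmod.
have cqT : br c (br q T) = (2 * g q v) *: c - T.
  rewrite extremal_ad_br_ad // extremal_adad // gZr g_cq mulr1 g_c_qv.
  by rewrite scale0r subr0 scale1r.
rewrite br_jacobi br_h'c brZl (br_jacobi h' q v) br_h'q brZl h'v.
by rewrite !brDr !brZr br_qd br0r cqT; lmod.
Qed.

Local Notation j := (- T - (2 * g q v) *: c).
Local Notation j' := (v + T + g q v *: c - s *: d).

Lemma decomposition_J : grad_m1 br g x y j /\ grad_m1 br g c q j.
Proof.
split; [apply/grad_m1_xyP | apply/grad_m1_cqP]; rewrite !brDr !brNr !brZr.
  by rewrite br_xT br_hT br_xc br_hc; split; lmod.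
by rewrite br_cT br_h'T brxx br_h'c; split; lmod.
Qed.

Lemma decomposition_J' : grad_m1 br g x y j' /\ grad_0 br c q j'.
Proof.
split; first by apply/grad_m1_xyP; rewrite !brDr !brNr !brZr br_xT br_hT br_xc br_hc
  br_xd br_hd x_v h_v; split; lmod.
split; exists 0; rewrite scale0r !brDr !brNr !brZr.
  by rewrite Hcv br_cT brxx Hcd; lmod.
by rewrite br_qT br_qd; lmod.
Qed.

End Decomposition.

Local Notation J j := (grad_m1 br g x y j /\ grad_m1 br g c q j).
Local Notation J' j := (grad_m1 br g x y j /\ grad_0 br c q j).

Lemma grad_m1_decompose v : grad_m1 br g x y v <->
  exists (l : k) (j j' : L) (m : k), [/\ J j, J' j' & v = l *: c + j + j' + m *: d].
Proof.
split=> [Hv | [l [j [j' [m [[Hj _] [Hj' _] ->]]]]]].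
  have [s Hcv] := grad_m1_br Hx Hc1 Hv.
  exists (g q v), (- br c (br q v) - (2 * g q v) *: c),
    (v + br c (br q v) + g q v *: c - s *: d), s.
  by split; [exact: decomposition_J Hv Hcv | exact: decomposition_J' Hv Hcv | lmod].
have [xj hj] := (grad_m1_xyP j).1 Hj; have [xj' hj'] := (grad_m1_xyP j').1 Hj'.
apply/grad_m1_xyP; rewrite !brDr !brZr br_xc br_hc br_xd br_hd xj hj xj' hj'.
by split; lmod.
Qed.

Lemma grad_m1_decompose_direct l j j' m : J j -> J' j' ->
  l *: c + j + j' + m *: d = 0 -> [/\ l *: c = 0, j = 0, j' = 0 & m *: d = 0].
Proof.
move=> [_ Hj] [Hj'x Hj'0] E.
have [cj h'j] := (grad_m1_cqP j).1 Hj.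
have gqj := grad_m1_gb Hc q_ext g_cq Hj.
have [cj' qj' gqj' h'j'] := grad_m1_cap_grad_0 Hj'x Hj'0.
have m0 : m = 0.
  have := congr1 (br c) E; rewrite !brDr !brZr brxx cj cj' Hcd br0r => E'.
  by apply: (extremal_scaler_eq0 Hx); apply: (eq_by_diff E'); lmod.
have l0 : l = 0.
  have := congr1 (g q) E; rewrite !gDr !gZr g_qc gqj gqj' m0 g0r mul0r => E'.
  by apply: (eq_by_diff E'); ring.
move: E; rewrite l0 m0 !scale0r add0r addr0 => E.
have j0 : j = 0.
  have := congr1 (br h') E; rewrite brDr h'j h'j' br0r => E'.
  by apply: (eq_by_diff (esym E')); lmod.
by move: E; rewrite j0 add0r => j'0.
Qed.

Lemma grad_m1_cap_grad_1 v :
  grad_m1 br g x y v /\ grad_1 br g c q v <-> exists m : k, v = m *: d.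
Proof.
have gqd : g q d = 0.
  apply: (grad_m1_ga (b := c) q_ext); apply/grad_1_m1/grad_1_cqP.
  by split; [exact: br_qd | exact: br_h'd].
split=> [[Hv H1] | [m ->]]; last first.
  split; [apply/grad_m1_xyP | apply/grad_1_cqP].
    by rewrite !brZr br_xd br_hd; split; lmod.
  by rewrite !brZr br_qd br_h'd; split; lmod.
have [qv h'v] := (grad_1_cqP v).1 H1.
have gqv : g q v = 0 by apply: (grad_m1_ga (b := c) q_ext); apply/grad_1_m1.
have [l [j [j' [m [[_ Hj] [Hj'x Hj'0] Ev]]]]] := (grad_m1_decompose v).1 Hv.
have [cj h'j] := (grad_m1_cqP j).1 Hj.
have gqj := grad_m1_gb Hc q_ext g_cq Hj.
have [cj' qj' gqj' h'j'] := grad_m1_cap_grad_0 Hj'x Hj'0.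
have l0 : l = 0.
  by move: gqv; rewrite Ev !gDr !gZr g_qc gqj gqj' gqd => E; apply: (eq_by_diff E); ring.
have j0 : j = 0.
  have qj : br q j = 0.
    move: qv; rewrite Ev !brDr !brZr qj' br_qd l0 => E.
    by apply: (eq_by_diff E); lmod.
  by rewrite -[j]opprK -(grad_m1_adb cj h'j) qj br0r oppr0.
by exists m; rewrite -h'v Ev l0 j0 !brDr !brZr br0r h'j' br_h'd; lmod.
Qed.

End Proposition.
End Simple.
End LieAlgebra.

Unset Implicit Arguments.

Theorem proposition4p6 (k : fieldType) (L : lmodType k) (br : L -> L -> L)
  (g : L -> L -> k)
  (Hk : card_ge4 k)
  (Hbr : is_lie_bracket br)
  (Hsimple : lie_simple br)
  (Hgen : generated_by_pure br)
  (Hlines : has_lines br)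
  (Hg : extremal_form_g br g)
  (x y c d : L)
  (Hx : extremal br x) (Hy : extremal br y) (Hxy : g x y = 1)
  (Hc : extremal br c) (Hc1 : grad_m1 br g x y c)
  (Hd : extremal br d) (Hd1 : grad_m1 br g x y d)
  (Hcd : br c d = x) :
  let q := - br y d in
  let J := fun v => grad_m1 br g x y v /\ grad_m1 br g c q v in
  let J' := fun v => grad_m1 br g x y v /\ grad_0 br c q v in
  [/\ (forall v, grad_m1 br g x y v <->
         exists (l : k) (j j' : L) (m : k),
           [/\ J j, J' j' & v = l *: c + j + j' + m *: d]),
      (forall (l : k) (j j' : L) (m : k), J j -> J' j' ->
         l *: c + j + j' + m *: d = 0 ->
         [/\ l *: c = 0, j = 0, j' = 0 & m *: d = 0]) &
      (forall v, grad_m1 br g x y v /\ grad_1 br g c q v <->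
         exists m : k, v = m *: d)].
Proof.
move=> q J J'; have Hq : q = - br y d by [].
by split; [apply: grad_m1_decompose | apply: grad_m1_decompose_direct |
  apply: grad_m1_cap_grad_1].
Qed.
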